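(* Let $N\ge 2$ and let $f:\mathbb{C}\to\mathbb{C}^N$ be the Veronese map $f(\zeta)=\left(\binom{N-1}{k}^{1/2}\zeta^k\right)_{k=0}^{N-1}$, so $|f|^2=(1+|\zeta|^2)^{N-1}$. Define $P_+^0 f=f$, $P_+^{k+1}f=P_+(P_+^k f)$, where $P_+ g=\partial g-g\,\frac{g^\dagger\cdot\partial g}{g^\dagger\cdot g}$, $\partial=\partial/\partial\zeta$, $\bar\partial=\partial/\partial\bar\zeta$, and let $P_k=\frac{P_+^k f\otimes (P_+^k f)^\dagger}{|P_+^k f|^2}$ for $k=0,\dots,N-1$. Let $\alpha_0,\dots,\alpha_{N-2}$ be real constants, not all zero, and $\mathbb{P}=\sum_{k=0}^{N-2}\alpha_kP_k$. Then the induced metric of the associated surface satisfies $g_{++}=\operatorname{tr}(\partial\mathbb{P}\partial\mathbb{P})=0$ and $$g_{+-}=\operatorname{tr}(\partial\mathbb{P}\,\bar\partial\mathbb{P})=\frac{\alpha}{(1+|\zeta|^2)^2}$$ for some positive constant $\alpha$ (depending on $N$ and the $\alpha_k$). Consequently the surface has constant curvature $$K:=-\frac{4}{g_{+-}}\,\partial\bar\partial\ln g_{+-}=\frac{8}{\alpha}.$$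
   Context: Here $\zeta$ is the complex coordinate on the plane obtained from $S^2$ by stereographic projection, $\dagger$ denotes Hermitian conjugation, $g^\dagger\cdot h=\sum_i\bar g^ih^i$, $|g|^2=g^\dagger\cdot g$. The vectors $P_+^kf$ define harmonic maps $S^2\to CP^{N-1}$ (the Veronese sequence). The Hermitian matrix $\mathbb{P}$ defines a surface in $\mathbb{R}^{N^2-1}$ (coordinates: real and imaginary parts of its entries), whose metric components are $g_{++}=\operatorname{tr}(\partial\mathbb{P}\partial\mathbb{P})$, $g_{+-}=\operatorname{tr}(\partial\mathbb{P}\bar\partial\mathbb{P})$, $g_{--}=\overline{g_{++}}$, and whose curvature (when $g_{++}=0$) is $K=-\frac{4}{g_{+-}}\partial\bar\partial\ln g_{+-}$. *)

From HB Require Import structures.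
From mathcomp Require Import all_boot all_order all_algebra.
From mathcomp Require Import reals normedtype derive exp.
From mathcomp Require Import complex.
Set Implicit Arguments. Unset Strict Implicit. Unset Printing Implicit Defensive.
Import Order.TTheory GRing.Theory Num.Theory numFieldNormedType.Exports.
Local Open Scope ring_scope.
Local Open Scope complex_scope.

(* A (complex-valued) field on the plane: the point is zeta = x + i y. *)

Definition dx (R : realType) (F : R -> R -> R[i]) (x y : R) : R[i] :=
  (derive1 (fun t => @complex.Re R (F t y)) x) +i* (derive1 (fun t => @complex.Im R (F t y)) x).
Definition dy (R : realType) (F : R -> R -> R[i]) (x y : R) : R[i] :=
  (derive1 (fun t => @complex.Re R (F x t)) y) +i* (derive1 (fun t => @complex.Im R (F x t)) y).

Definition del (R : realType) (F : R -> R -> R[i]) (x y : R) : R[i] :=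
  (dx F x y - 'i * dy F x y) / 2%:R.
Definition delb (R : realType) (F : R -> R -> R[i]) (x y : R) : R[i] :=
  (dx F x y + 'i * dy F x y) / 2%:R.

Definition vdel (R : realType) (N : nat) (g : R -> R -> 'I_N -> R[i]) :
  R -> R -> 'I_N -> R[i] := fun x y i => del (fun x' y' => g x' y' i) x y.

Definition herm (R : realType) (N : nat) (g h : 'I_N -> R[i]) : R[i] :=
  \sum_(i < N) conjc (g i) * h i.

Definition Pplus (R : realType) (N : nat) (g : R -> R -> 'I_N -> R[i]) :
  R -> R -> 'I_N -> R[i] :=
  fun x y i => vdel g x y i
                - g x y i * (herm (g x y) (vdel g x y) / herm (g x y) (g x y)).

Definition veronese (R : realType) (N : nat) : R -> R -> 'I_N -> R[i] :=
  fun x y k => ((Num.sqrt ('C(N.-1, k))%:R)%:C) * (x +i* y) ^+ k.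

Definition Pk (R : realType) (N : nat) (k : nat) : R -> R -> 'I_N -> R[i] :=
  iter k (@Pplus R N) (@veronese R N).

Definition proj (R : realType) (N : nat) (g : R -> R -> 'I_N -> R[i]) (x y : R) :
  'M[R[i]]_N :=
  \matrix_(i, j) (g x y i * conjc (g x y j) / herm (g x y) (g x y)).

Definition Pmat (R : realType) (N : nat) (k : nat) (x y : R) : 'M[R[i]]_N :=
  proj (@Pk R N k) x y.

Definition bbP (R : realType) (N : nat) (alpha : 'I_N.-1 -> R) (x y : R) :
  'M[R[i]]_N :=
  \sum_(k < N.-1) ((alpha k)%:C) *: @Pmat R N k x y.

Definition mdel (R : realType) (N : nat) (M : R -> R -> 'M[R[i]]_N) (x y : R) :
  'M[R[i]]_N := \matrix_(i, j) del (fun x' y' => M x' y' i j) x y.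
Definition mdelb (R : realType) (N : nat) (M : R -> R -> 'M[R[i]]_N) (x y : R) :
  'M[R[i]]_N := \matrix_(i, j) delb (fun x' y' => M x' y' i j) x y.

Definition gpp (R : realType) (N : nat) (M : R -> R -> 'M[R[i]]_N) (x y : R) : R[i] :=
  \tr (mdel M x y *m mdel M x y).
Definition gpm (R : realType) (N : nat) (M : R -> R -> 'M[R[i]]_N) (x y : R) : R[i] :=
  \tr (mdel M x y *m mdelb M x y).

(* curvature K = -(4 / g_{+-}) del delb ln g_{+-}; the logarithm is taken of the
   real part of g_{+-} (g_{+-} is real for a Hermitian bbP). *)
Definition curvature (R : realType) (N : nat) (M : R -> R -> 'M[R[i]]_N) (x y : R) : R[i] :=
  - ((4%:R) / gpm M x y) *
    del (delb (fun x' y' => (ln (@complex.Re R (gpm M x' y')))%:C)) x y.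

From HB Require Import structures.
From mathcomp Require Import all_boot all_order all_algebra.
From mathcomp Require Import reals normedtype derive exp realfun.
From mathcomp Require Import complex.
From mathcomp Require Import ring lra.
Set Implicit Arguments. Unset Strict Implicit. Unset Printing Implicit Defensive.
Import Order.TTheory GRing.Theory Num.Theory numFieldNormedType.Exports.
Local Open Scope ring_scope.
Local Open Scope complex_scope.

(* Write f_k = P_+^k f and rho = 1 + |zeta|^2.  Since P_+ g is the part of del g
   orthogonal to g, induction on k gives, for k <= N - 1,
     dbar f_k = - q_k f_(k-1)  with  q_k = k (N - k) / rho^2,
     f_j _|_ f_k  for j < k,   and   |f_k|^2 = c_k rho^(N-1-2k).
   Consequently del P_k = A_k - A_(k-1) with A_k = f_(k+1) (x) f_k^dagger / |f_k|^2,
   and summation by parts turns del bbP into sum_k (alpha_k - alpha_(k+1)) A_k.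
   By orthogonality tr (A_j A_k) = 0 and tr (A_j A_k^dagger) is zero unless j = k,
   when it is |f_(k+1)|^2 / |f_k|^2 = (k+1) (N-1-k) / rho^2.  So g_++ = 0 and
   g_+- = alpha / rho^2 with alpha = sum_k (alpha_k - alpha_(k+1))^2 (k+1) (N-1-k),
   which is positive unless all alpha_k vanish; the curvature of alpha / rho^2 is 8/alpha. *)

Section ComplexDerivative.
Variable R : realType.
Local Notation C := R[i].
Local Notation Re := (@complex.Re R).
Local Notation Im := (@complex.Im R).
Implicit Types (g h : R -> C) (t : R).

Let ReD (u v : C) : Re (u + v) = Re u + Re v. Proof. by case: u v => a b []. Qed.
Let ImD (u v : C) : Im (u + v) = Im u + Im v. Proof. by case: u v => a b []. Qed.
Let ReN (u : C) : Re (- u) = - Re u. Proof. by case: u. Qed.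
Let ImN (u : C) : Im (- u) = - Im u. Proof. by case: u. Qed.
Let ReM (u v : C) : Re (u * v) = Re u * Re v - Im u * Im v. Proof. by case: u v => a b []. Qed.
Let ImM (u v : C) : Im (u * v) = Re u * Im v + Im u * Re v. Proof. by case: u v => a b []. Qed.
Let ReJ (u : C) : Re (conjc u) = Re u. Proof. by case: u. Qed.
Let ImJ (u : C) : Im (conjc u) = - Im u. Proof. by case: u. Qed.

Let ReV (u : C) : Re u^-1 = Re u / (Re u * Re u + Im u * Im u).
Proof. by case: u => a b /=; rewrite !expr2. Qed.

Let ImV (u : C) : Im u^-1 = - Im u / (Re u * Re u + Im u * Im u).
Proof. by case: u => a b /=; rewrite mulNr !expr2. Qed.

(* Pointwise forms of [derivableM], [deriveM], [derivableV]: the function-level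
   products of those lemmas do not unify with the lambda-terms occurring below. *)
Lemma derivable_mul (f1 f2 : R -> R) t : derivable f1 t 1 -> derivable f2 t 1 ->
  derivable (fun s => f1 s * f2 s) t 1.
Proof. exact: (@derivableM R R^o f1 f2 t 1). Qed.

Lemma derive_mul (f1 f2 : R -> R) t : derivable f1 t 1 -> derivable f2 t 1 ->
  'D_1 (fun s => f1 s * f2 s) t = f1 t * 'D_1 f2 t + f2 t * 'D_1 f1 t.
Proof. exact: (@deriveM R R^o f1 f2 t 1). Qed.

Lemma derivable_inv (f : R -> R) t : f t != 0 -> derivable f t 1 ->
  derivable (fun s => (f s)^-1) t 1.
Proof. exact: (@derivableV R R^o f t 1). Qed.

Definition cderivable g t :=
  derivable (fun s => Re (g s)) t 1 /\ derivable (fun s => Im (g s)) t 1.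

Definition cderive g t : C :=
  'D_1 (fun s => Re (g s)) t +i* 'D_1 (fun s => Im (g s)) t.

Lemma cderivable_cst (c : C) t : cderivable (fun=> c) t.
Proof. by split; apply: derivable_cst. Qed.

Lemma cderive_cst (c : C) t : cderive (fun=> c) t = 0.
Proof. by rewrite /cderive !derive_cst. Qed.

Lemma cderivable_real t : cderivable (fun s => s%:C) t.
Proof. by split; [apply: derivable_id | apply: derivable_cst]. Qed.

Lemma cderive_real t : cderive (fun s => s%:C) t = 1.
Proof. by rewrite /cderive derive_id derive_cst. Qed.

Lemma cderivableD g h t :
  cderivable g t -> cderivable h t -> cderivable (fun s => g s + h s) t.
Proof.
by move=> [g1 g2] [h1 h2]; split;
  [under boolp.eq_fun do rewrite ReD | under boolp.eq_fun do rewrite ImD];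
  exact: derivableD.
Qed.

Lemma cderiveD g h t : cderivable g t -> cderivable h t ->
  cderive (fun s => g s + h s) t = cderive g t + cderive h t.
Proof.
move=> [g1 g2] [h1 h2]; congr (_ +i* _).
  by under boolp.eq_fun do rewrite ReD; exact: deriveD.
by under boolp.eq_fun do rewrite ImD; exact: deriveD.
Qed.

Lemma cderivableN g t : cderivable g t -> cderivable (fun s => - g s) t.
Proof.
by move=> [g1 g2]; split;
  [under boolp.eq_fun do rewrite ReN | under boolp.eq_fun do rewrite ImN];
  exact: derivableN.
Qed.

Lemma cderiveN g t : cderivable g t -> cderive (fun s => - g s) t = - cderive g t.
Proof.
move=> [g1 g2]; congr (_ +i* _).
  by under boolp.eq_fun do rewrite ReN; exact: deriveN.
by under boolp.eq_fun do rewrite ImN; exact: deriveN.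
Qed.

Lemma cderivableM g h t :
  cderivable g t -> cderivable h t -> cderivable (fun s => g s * h s) t.
Proof.
move=> [g1 g2] [h1 h2]; split.
  by under boolp.eq_fun do rewrite ReM; apply: derivableB; exact: derivable_mul.
by under boolp.eq_fun do rewrite ImM; apply: derivableD; exact: derivable_mul.
Qed.

Lemma cderiveM g h t : cderivable g t -> cderivable h t ->
  cderive (fun s => g s * h s) t = cderive g t * h t + g t * cderive h t.
Proof.
move=> [g1 g2] [h1 h2].
apply/eqP; rewrite eq_complex ReD ImD !ReM !ImM /=; apply/andP; split; apply/eqP.
  under boolp.eq_fun do rewrite ReM.
  rewrite (deriveB (derivable_mul g1 h1) (derivable_mul g2 h2)).
  by rewrite (derive_mul g1 h1) (derive_mul g2 h2); ring.
under boolp.eq_fun do rewrite ImM.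
rewrite (deriveD (derivable_mul g1 h2) (derivable_mul g2 h1)).
by rewrite (derive_mul g1 h2) (derive_mul g2 h1); ring.
Qed.

Lemma cderivableJ g t : cderivable g t -> cderivable (fun s => conjc (g s)) t.
Proof.
move=> [g1 g2]; split; first by under boolp.eq_fun do rewrite ReJ; exact: g1.
by under boolp.eq_fun do rewrite ImJ; exact: derivableN g2.
Qed.

Lemma cderiveJ g t : cderivable g t -> cderive (fun s => conjc (g s)) t = conjc (cderive g t).
Proof.
move=> [g1 g2]; congr (_ +i* _); first by under boolp.eq_fun do rewrite ReJ.
by under boolp.eq_fun do rewrite ImJ; exact: deriveN.
Qed.

Lemma cderivableV g t : (forall s, g s != 0) -> cderivable g t ->
  cderivable (fun s => (g s)^-1) t.
Proof.
move=> g_neq0 [g1 g2].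
pose n2 s := Re (g s) * Re (g s) + Im (g s) * Im (g s).
have n2_neq0 s : n2 s != 0.
  move: (g_neq0 s); apply: contra; rewrite /n2; case: (g s) => a b /=.
  by rewrite -!expr2 paddr_eq0 ?sqr_ge0 // !sqrf_eq0 => /andP[/eqP-> /eqP->].
have dn2 : derivable n2 t 1 := derivableD (derivable_mul g1 g1) (derivable_mul g2 g2).
have dn := derivable_inv (n2_neq0 t) dn2.
split.
  by under boolp.eq_fun do rewrite ReV; exact: derivable_mul g1 dn.
by under boolp.eq_fun do rewrite ImV; exact: derivable_mul (derivableN g2) dn.
Qed.

Lemma cderiveV g t : (forall s, g s != 0) -> cderivable g t ->
  cderive (fun s => (g s)^-1) t = - cderive g t / g t ^+ 2.
Proof.
move=> g_neq0 dg; have dgV := cderivableV g_neq0 dg.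
have := cderiveM dg dgV.
under boolp.eq_fun do rewrite mulfV //.
rewrite cderive_cst => /eqP; rewrite eq_sym addrC addr_eq0 => /eqP dg_dgV.
apply: (mulfI (g_neq0 t)); rewrite dg_dgV; field; exact: g_neq0.
Qed.

Lemma cderive_ln (u : R -> R) t : 0 < u t -> derivable u t 1 ->
  cderive (fun s => (ln (u s))%:C) t = cderive (fun s => (u s)%:C) t / (u t)%:C.
Proof.
move=> ut du; have hd := is_derive1_comp (is_derive1_ln ut) (derivableP du).
rewrite /cderive /= !derive_cst.
have -> : 'D_1 (fun s => ln (u s)) t = (u t)^-1 * 'D_1 u t.
  by rewrite -(@derive_val _ _ _ _ _ _ _ hd).
by rewrite !complexr0 -fmorphV -rmorphM mulrC.
Qed.

End ComplexDerivative.

Section PartialDerivatives.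
Variable R : realType.
Local Notation C := R[i].
Implicit Types F G : R -> R -> C.

Definition pderivable F := forall x y, cderivable (F^~ y) x /\ cderivable (F x) y.

Lemma dxE F x y : dx F x y = cderive (F^~ y) x.
Proof. by rewrite /dx /cderive !derive1E. Qed.

Lemma dyE F x y : dy F x y = cderive (F x) y.
Proof. by rewrite /dy /cderive !derive1E. Qed.

Lemma pderivable_cst (c : C) : pderivable (fun _ _ => c).
Proof. by move=> x y; split; apply: cderivable_cst. Qed.

Lemma pderivable_x : pderivable (fun x _ : R => x%:C).
Proof. by move=> x y; split; [apply: cderivable_real | apply: cderivable_cst]. Qed.

Lemma pderivable_y : pderivable (fun _ y : R => y%:C).
Proof. by move=> x y; split; [apply: cderivable_cst | apply: cderivable_real]. Qed.

Lemma pderivableD F G : pderivable F -> pderivable G -> pderivable (fun x y => F x y + G x y).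
Proof.
by move=> dF dG x y; split; apply: cderivableD; [exact: (dF x y).1 | exact: (dG x y).1
  | exact: (dF x y).2 | exact: (dG x y).2].
Qed.

Lemma pderivableN F : pderivable F -> pderivable (fun x y => - F x y).
Proof. by move=> dF x y; split; apply: cderivableN; [exact: (dF x y).1 | exact: (dF x y).2]. Qed.

Lemma pderivableM F G : pderivable F -> pderivable G -> pderivable (fun x y => F x y * G x y).
Proof.
by move=> dF dG x y; split; apply: cderivableM; [exact: (dF x y).1 | exact: (dG x y).1
  | exact: (dF x y).2 | exact: (dG x y).2].
Qed.

Lemma pderivableJ F : pderivable F -> pderivable (fun x y => conjc (F x y)).
Proof. by move=> dF x y; split; apply: cderivableJ; [exact: (dF x y).1 | exact: (dF x y).2]. Qed.

Lemma pderivableV F : (forall x y, F x y != 0) -> pderivable F ->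
  pderivable (fun x y => (F x y)^-1).
Proof.
move=> F_neq0 dF x y; split.
  exact: (cderivableV (fun s => F_neq0 s y) (dF x y).1).
exact: (cderivableV (F_neq0 x) (dF x y).2).
Qed.

Lemma dx_cst (c : C) : dx (fun _ _ => c) = fun _ _ => 0.
Proof. by apply/boolp.funeq2P => x y; rewrite dxE cderive_cst. Qed.

Lemma dy_cst (c : C) : dy (fun _ _ => c) = fun _ _ => 0.
Proof. by apply/boolp.funeq2P => x y; rewrite dyE cderive_cst. Qed.

Lemma dx_x : dx (fun x _ : R => x%:C) = fun _ _ => 1.
Proof. by apply/boolp.funeq2P => x y; rewrite dxE cderive_real. Qed.

Lemma dy_x : dy (fun x _ : R => x%:C) = fun _ _ => 0.
Proof. by apply/boolp.funeq2P => x y; rewrite dyE cderive_cst. Qed.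

Lemma dx_y : dx (fun _ y : R => y%:C) = fun _ _ => 0.
Proof. by apply/boolp.funeq2P => x y; rewrite dxE cderive_cst. Qed.

Lemma dy_y : dy (fun _ y : R => y%:C) = fun _ _ => 1.
Proof. by apply/boolp.funeq2P => x y; rewrite dyE cderive_real. Qed.

Lemma dxD F G : pderivable F -> pderivable G ->
  dx (fun x y => F x y + G x y) = fun x y => dx F x y + dx G x y.
Proof.
by move=> dF dG; apply/boolp.funeq2P => x y; rewrite !dxE (cderiveD (dF x y).1 (dG x y).1).
Qed.

Lemma dyD F G : pderivable F -> pderivable G ->
  dy (fun x y => F x y + G x y) = fun x y => dy F x y + dy G x y.
Proof.
by move=> dF dG; apply/boolp.funeq2P => x y; rewrite !dyE (cderiveD (dF x y).2 (dG x y).2).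
Qed.

Lemma dxN F : pderivable F -> dx (fun x y => - F x y) = fun x y => - dx F x y.
Proof. by move=> dF; apply/boolp.funeq2P => x y; rewrite !dxE (cderiveN (dF x y).1). Qed.

Lemma dyN F : pderivable F -> dy (fun x y => - F x y) = fun x y => - dy F x y.
Proof. by move=> dF; apply/boolp.funeq2P => x y; rewrite !dyE (cderiveN (dF x y).2). Qed.

Lemma dxM F G : pderivable F -> pderivable G ->
  dx (fun x y => F x y * G x y) = fun x y => dx F x y * G x y + F x y * dx G x y.
Proof.
by move=> dF dG; apply/boolp.funeq2P => x y; rewrite !dxE (cderiveM (dF x y).1 (dG x y).1).
Qed.

Lemma dyM F G : pderivable F -> pderivable G ->
  dy (fun x y => F x y * G x y) = fun x y => dy F x y * G x y + F x y * dy G x y.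
Proof.
by move=> dF dG; apply/boolp.funeq2P => x y; rewrite !dyE (cderiveM (dF x y).2 (dG x y).2).
Qed.

Lemma dxJ F : pderivable F -> dx (fun x y => conjc (F x y)) = fun x y => conjc (dx F x y).
Proof. by move=> dF; apply/boolp.funeq2P => x y; rewrite !dxE (cderiveJ (dF x y).1). Qed.

Lemma dyJ F : pderivable F -> dy (fun x y => conjc (F x y)) = fun x y => conjc (dy F x y).
Proof. by move=> dF; apply/boolp.funeq2P => x y; rewrite !dyE (cderiveJ (dF x y).2). Qed.

Lemma dxV F : (forall x y, F x y != 0) -> pderivable F ->
  dx (fun x y => (F x y)^-1) = fun x y => - dx F x y * ((F x y)^-1 * (F x y)^-1).
Proof.
move=> F_neq0 dF; apply/boolp.funeq2P => x y.
by rewrite !dxE (cderiveV (fun s => F_neq0 s y) (dF x y).1) expr2 invfM.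
Qed.

Lemma dyV F : (forall x y, F x y != 0) -> pderivable F ->
  dy (fun x y => (F x y)^-1) = fun x y => - dy F x y * ((F x y)^-1 * (F x y)^-1).
Proof.
move=> F_neq0 dF; apply/boolp.funeq2P => x y.
by rewrite !dyE (cderiveV (F_neq0 x) (dF x y).2) expr2 invfM.
Qed.
End PartialDerivatives.

(* Keeps unification from unfolding partial derivatives into limits. *)
Opaque dx dy.

Section Smoothness.
Variable R : realType.
Local Notation C := R[i].
Implicit Types F G : R -> R -> C.

(* The symmetry
   is part of the definition instead of a consequence of Schwarz's theorem; the class
   is still closed under the field operations and contains the coordinates. *)
Fixpoint smooth_upto n F : Prop :=
  if n is n'.+1 then
    [/\ pderivable F, smooth_upto n' (dx F), smooth_upto n' (dy F)
      & if n' is _.+1 then dx (dy F) = dy (dx F) else True]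
  else True.

Lemma smooth_upto_pderivable n F : smooth_upto n.+1 F -> pderivable F.
Proof. by case. Qed.

Lemma smooth_upto_dx n F : smooth_upto n.+1 F -> smooth_upto n (dx F).
Proof. by case. Qed.

Lemma smooth_upto_dy n F : smooth_upto n.+1 F -> smooth_upto n (dy F).
Proof. by case. Qed.

Lemma smooth_upto_dxy n F : smooth_upto n.+2 F -> dx (dy F) = dy (dx F).
Proof. by case. Qed.

Lemma smooth_uptoW n F : smooth_upto n.+1 F -> smooth_upto n F.
Proof.
elim: n F => [//|n IH] F [dF Fx Fy Fxy].
by split; [exact: dF | exact: IH Fx | exact: IH Fy | case: n {IH Fx Fy} Fxy].
Qed.

Lemma smooth_upto_cst n (c : C) : smooth_upto n (fun _ _ => c).
Proof.
elim: n c => [//|n IH] c; split; first exact: pderivable_cst.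
- by rewrite dx_cst; exact: IH.
- by rewrite dy_cst; exact: IH.
- by case: n {IH} => [//|n]; rewrite dy_cst !dx_cst dy_cst.
Qed.

Lemma smooth_upto_x n : smooth_upto n (fun x _ : R => x%:C).
Proof.
case: n => [//|n]; split; first exact: pderivable_x.
- by rewrite dx_x; exact: smooth_upto_cst.
- by rewrite dy_x; exact: smooth_upto_cst.
- by case: n => [//|n]; rewrite dy_x dx_x dx_cst dy_cst.
Qed.

Lemma smooth_upto_y n : smooth_upto n (fun _ y : R => y%:C).
Proof.
case: n => [//|n]; split; first exact: pderivable_y.
- by rewrite dx_y; exact: smooth_upto_cst.
- by rewrite dy_y; exact: smooth_upto_cst.
- by case: n => [//|n]; rewrite dy_y dx_y dx_cst dy_cst.
Qed.

Lemma smooth_uptoD n F G : smooth_upto n F -> smooth_upto n G ->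
  smooth_upto n (fun x y => F x y + G x y).
Proof.
elim: n F G => [//|n IH] F G [dF Fx Fy Fxy] [dG Gx Gy Gxy].
split; first exact: pderivableD.
- by rewrite (dxD dF dG); exact: IH.
- by rewrite (dyD dF dG); exact: IH.
case: n {IH} Fx Fy Gx Gy Fxy Gxy => [//|n] [dFx _ _ _] [dFy _ _ _] [dGx _ _ _] [dGy _ _ _] Fxy Gxy.
by rewrite (dyD dF dG) (dxD dF dG) (dxD dFy dGy) (dyD dFx dGx) Fxy Gxy.
Qed.

Lemma smooth_uptoN n F : smooth_upto n F -> smooth_upto n (fun x y => - F x y).
Proof.
elim: n F => [//|n IH] F [dF Fx Fy Fxy].
split; first exact: pderivableN.
- by rewrite (dxN dF); exact: IH.
- by rewrite (dyN dF); exact: IH.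
case: n {IH} Fx Fy Fxy => [//|n] [dFx _ _ _] [dFy _ _ _] Fxy.
by rewrite (dyN dF) (dxN dF) (dxN dFy) (dyN dFx) Fxy.
Qed.

Lemma smooth_uptoJ n F : smooth_upto n F -> smooth_upto n (fun x y => conjc (F x y)).
Proof.
elim: n F => [//|n IH] F [dF Fx Fy Fxy].
split; first exact: pderivableJ.
- by rewrite (dxJ dF); exact: IH.
- by rewrite (dyJ dF); exact: IH.
case: n {IH} Fx Fy Fxy => [//|n] [dFx _ _ _] [dFy _ _ _] Fxy.
by rewrite (dyJ dF) (dxJ dF) (dxJ dFy) (dyJ dFx) Fxy.
Qed.

Lemma smooth_uptoM n F G : smooth_upto n F -> smooth_upto n G ->
  smooth_upto n (fun x y => F x y * G x y).
Proof.
elim: n F G => [//|n IH] F G sF sG.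
have [dF Fx Fy Fxy] := sF; have [dG Gx Gy Gxy] := sG.
split; first exact: pderivableM.
- rewrite (dxM dF dG); apply: smooth_uptoD.
    exact: IH Fx (smooth_uptoW sG).
  exact: IH (smooth_uptoW sF) Gx.
- rewrite (dyM dF dG); apply: smooth_uptoD.
    exact: IH Fy (smooth_uptoW sG).
  exact: IH (smooth_uptoW sF) Gy.
case: n {IH sF sG} Fx Fy Gx Gy Fxy Gxy
  => [//|n] [dFx _ _ _] [dFy _ _ _] [dGx _ _ _] [dGy _ _ _] Fxy Gxy.
rewrite (dyM dF dG) (dxM dF dG).
rewrite (dxD (pderivableM dFy dG) (pderivableM dF dGy)).
rewrite (dyD (pderivableM dFx dG) (pderivableM dF dGx)).
rewrite (dxM dFy dG) (dxM dF dGy) (dyM dFx dG) (dyM dF dGx) Fxy Gxy.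
by apply/boolp.funeq2P => x y; exact: addrACA.
Qed.

Lemma smooth_uptoV n F : (forall x y, F x y != 0) -> smooth_upto n F ->
  smooth_upto n (fun x y => (F x y)^-1).
Proof.
move=> F_neq0; elim: n F F_neq0 => [//|n IH] F F_neq0 sF.
have [dF Fx Fy Fxy] := sF; have sFV := IH F F_neq0 (smooth_uptoW sF).
split; first exact: pderivableV.
- rewrite (dxV F_neq0 dF); apply: smooth_uptoM; first exact: smooth_uptoN Fx.
  exact: smooth_uptoM.
- rewrite (dyV F_neq0 dF); apply: smooth_uptoM; first exact: smooth_uptoN Fy.
  exact: smooth_uptoM.
case: n {IH sF sFV} Fx Fy Fxy => [//|n] [dFx _ _ _] [dFy _ _ _] Fxy.
have dFV := pderivableV F_neq0 dF; have dFV2 := pderivableM dFV dFV.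
rewrite (dyV F_neq0 dF) (dxV F_neq0 dF).
rewrite (dxM (pderivableN dFy) dFV2) (dyM (pderivableN dFx) dFV2).
rewrite (dxN dFy) (dyN dFx) (dxM dFV dFV) (dyM dFV dFV) (dxV F_neq0 dF) (dyV F_neq0 dF) Fxy.
apply/boolp.funeq2P => x y.
by move: (dx F x y) (dy F x y) (dy (dx F) x y) (F x y)^-1 => a b c d; ring.
Qed.

Definition smooth F := forall n, smooth_upto n F.

Lemma smooth_pderivable F : smooth F -> pderivable F.
Proof. by move=> sF; exact: smooth_upto_pderivable (sF 1%N). Qed.

Lemma smooth_dx F : smooth F -> smooth (dx F).
Proof. by move=> sF n; exact: smooth_upto_dx (sF n.+1). Qed.

Lemma smooth_dy F : smooth F -> smooth (dy F).
Proof. by move=> sF n; exact: smooth_upto_dy (sF n.+1). Qed.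

Lemma smooth_dxy F : smooth F -> dx (dy F) = dy (dx F).
Proof. by move=> sF; exact: smooth_upto_dxy (sF 2%N). Qed.

Lemma smooth_cst (c : C) : smooth (fun _ _ => c).
Proof. by move=> n; exact: smooth_upto_cst. Qed.

Lemma smooth_x : smooth (fun x _ : R => x%:C).
Proof. by move=> n; exact: smooth_upto_x. Qed.

Lemma smooth_y : smooth (fun _ y : R => y%:C).
Proof. by move=> n; exact: smooth_upto_y. Qed.

Lemma smoothD F G : smooth F -> smooth G -> smooth (fun x y => F x y + G x y).
Proof. by move=> sF sG n; exact: smooth_uptoD. Qed.

Lemma smoothN F : smooth F -> smooth (fun x y => - F x y).
Proof. by move=> sF n; exact: smooth_uptoN. Qed.

Lemma smoothB F G : smooth F -> smooth G -> smooth (fun x y => F x y - G x y).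
Proof. by move=> sF sG; apply: smoothD sF _; exact: smoothN. Qed.

Lemma smoothM F G : smooth F -> smooth G -> smooth (fun x y => F x y * G x y).
Proof. by move=> sF sG n; exact: smooth_uptoM. Qed.

Lemma smoothJ F : smooth F -> smooth (fun x y => conjc (F x y)).
Proof. by move=> sF n; exact: smooth_uptoJ. Qed.

Lemma smoothV F : (forall x y, F x y != 0) -> smooth F -> smooth (fun x y => (F x y)^-1).
Proof. by move=> F_neq0 sF n; exact: smooth_uptoV. Qed.

Lemma smoothX F k : smooth F -> smooth (fun x y => F x y ^+ k).
Proof.
move=> sF; elim: k => [|k IH].
  by under boolp.eq2_fun do rewrite expr0; exact: smooth_cst.
by under boolp.eq2_fun do rewrite exprS; exact: smoothM.
Qed.

Lemma smooth_sum (I : Type) (r : seq I) (F : I -> R -> R -> C) :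
  (forall i, smooth (F i)) -> smooth (fun x y => \sum_(i <- r) F i x y).
Proof.
move=> sF; elim: r => [|i r IH].
  by under boolp.eq2_fun do rewrite big_nil; exact: smooth_cst.
by under boolp.eq2_fun do rewrite big_cons; exact: smoothD.
Qed.
End Smoothness.

Arguments smooth_x {R}.
Arguments smooth_y {R}.

Section Wirtinger.
Variable R : realType.
Local Notation C := R[i].
Implicit Types F G : R -> R -> C.

Lemma smooth_del F : smooth F -> smooth (del F).
Proof.
move=> sF; apply: smoothM (smooth_cst _); apply: smoothB (smooth_dx sF) _.
exact: smoothM (smooth_cst _) (smooth_dy sF).
Qed.

Lemma smooth_delb F : smooth F -> smooth (delb F).
Proof.
move=> sF; apply: smoothM (smooth_cst _); apply: smoothD (smooth_dx sF) _.
exact: smoothM (smooth_cst _) (smooth_dy sF).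
Qed.

Lemma del_cst (c : C) : del (fun _ _ => c) = fun _ _ => 0.
Proof. by apply/boolp.funeq2P => x y; rewrite /del dx_cst dy_cst mulr0 subr0 mul0r. Qed.

Lemma delb_cst (c : C) : delb (fun _ _ => c) = fun _ _ => 0.
Proof. by apply/boolp.funeq2P => x y; rewrite /delb dx_cst dy_cst mulr0 addr0 mul0r. Qed.

Lemma delD F G : smooth F -> smooth G ->
  del (fun x y => F x y + G x y) = fun x y => del F x y + del G x y.
Proof.
move=> /smooth_pderivable dF /smooth_pderivable dG; apply/boolp.funeq2P => x y.
by rewrite /del (dxD dF dG) (dyD dF dG); ring.
Qed.

Lemma delbD F G : smooth F -> smooth G ->
  delb (fun x y => F x y + G x y) = fun x y => delb F x y + delb G x y.
Proof.
move=> /smooth_pderivable dF /smooth_pderivable dG; apply/boolp.funeq2P => x y.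
by rewrite /delb (dxD dF dG) (dyD dF dG); ring.
Qed.

Lemma delN F : smooth F -> del (fun x y => - F x y) = fun x y => - del F x y.
Proof.
move=> /smooth_pderivable dF; apply/boolp.funeq2P => x y.
by rewrite /del (dxN dF) (dyN dF); ring.
Qed.

Lemma delbN F : smooth F -> delb (fun x y => - F x y) = fun x y => - delb F x y.
Proof.
move=> /smooth_pderivable dF; apply/boolp.funeq2P => x y.
by rewrite /delb (dxN dF) (dyN dF); ring.
Qed.

Lemma delM F G : smooth F -> smooth G ->
  del (fun x y => F x y * G x y) = fun x y => del F x y * G x y + F x y * del G x y.
Proof.
move=> /smooth_pderivable dF /smooth_pderivable dG; apply/boolp.funeq2P => x y.
by rewrite /del (dxM dF dG) (dyM dF dG); ring.
Qed.

Lemma delbM F G : smooth F -> smooth G ->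
  delb (fun x y => F x y * G x y) = fun x y => delb F x y * G x y + F x y * delb G x y.
Proof.
move=> /smooth_pderivable dF /smooth_pderivable dG; apply/boolp.funeq2P => x y.
by rewrite /delb (dxM dF dG) (dyM dF dG); ring.
Qed.

Lemma delV F : (forall x y, F x y != 0) -> smooth F ->
  del (fun x y => (F x y)^-1) = fun x y => - del F x y * ((F x y)^-1 * (F x y)^-1).
Proof.
move=> F_neq0 /smooth_pderivable dF; apply/boolp.funeq2P => x y.
by rewrite /del (dxV F_neq0 dF) (dyV F_neq0 dF); ring.
Qed.

Lemma delbV F : (forall x y, F x y != 0) -> smooth F ->
  delb (fun x y => (F x y)^-1) = fun x y => - delb F x y * ((F x y)^-1 * (F x y)^-1).
Proof.
move=> F_neq0 /smooth_pderivable dF; apply/boolp.funeq2P => x y.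
by rewrite /delb (dxV F_neq0 dF) (dyV F_neq0 dF); ring.
Qed.

Lemma conjc_i : conjc ('i : C) = - 'i.
Proof. by apply/eqP; rewrite eq_complex /= oppr0 !eqxx. Qed.

(* The morphism lemmas specialised to [conjc], so that rewriting with them keeps
   [conjc] as the head symbol. *)
Lemma conjcD (u v : C) : conjc (u + v) = conjc u + conjc v.
Proof. exact: rmorphD. Qed.

Lemma conjcB (u v : C) : conjc (u - v) = conjc u - conjc v.
Proof. exact: rmorphB. Qed.

Lemma conjcN (u : C) : conjc (- u) = - conjc u.
Proof. exact: rmorphN. Qed.

Lemma conjcM (u v : C) : conjc (u * v) = conjc u * conjc v.
Proof. exact: rmorphM. Qed.

Lemma delJ F : smooth F -> del (fun x y => conjc (F x y)) = fun x y => conjc (delb F x y).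
Proof.
move=> /smooth_pderivable dF; apply/boolp.funeq2P => x y.
rewrite /del /delb (dxJ dF) (dyJ dF) !conjcM conjcD conjcM conjc_i conjc_inv conjc_nat.
by ring.
Qed.

Lemma delbJ F : smooth F -> delb (fun x y => conjc (F x y)) = fun x y => conjc (del F x y).
Proof.
move=> /smooth_pderivable dF; apply/boolp.funeq2P => x y.
rewrite /del /delb (dxJ dF) (dyJ dF) !conjcM conjcB conjcM conjc_i conjc_inv conjc_nat.
by ring.
Qed.

Lemma del_sum (I : Type) (r : seq I) (F : I -> R -> R -> C) :
  (forall i, smooth (F i)) ->
  del (fun x y => \sum_(i <- r) F i x y) = fun x y => \sum_(i <- r) del (F i) x y.
Proof.
move=> sF; elim: r => [|i r IH].
  under boolp.eq2_fun do rewrite big_nil.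
  by rewrite del_cst; apply/boolp.funeq2P => x y; rewrite big_nil.
under boolp.eq2_fun do rewrite big_cons.
rewrite (delD (sF i) (smooth_sum _ sF)) IH.
by apply/boolp.funeq2P => x y; rewrite big_cons.
Qed.

Lemma delb_sum (I : Type) (r : seq I) (F : I -> R -> R -> C) :
  (forall i, smooth (F i)) ->
  delb (fun x y => \sum_(i <- r) F i x y) = fun x y => \sum_(i <- r) delb (F i) x y.
Proof.
move=> sF; elim: r => [|i r IH].
  under boolp.eq2_fun do rewrite big_nil.
  by rewrite delb_cst; apply/boolp.funeq2P => x y; rewrite big_nil.
under boolp.eq2_fun do rewrite big_cons.
rewrite (delbD (sF i) (smooth_sum _ sF)) IH.
by apply/boolp.funeq2P => x y; rewrite big_cons.
Qed.


Lemma delX F k : smooth F ->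
  del (fun x y => F x y ^+ k) = fun x y => k%:R * F x y ^+ k.-1 * del F x y.
Proof.
move=> sF; elim: k => [|k IH].
  under boolp.eq2_fun do rewrite expr0.
  by rewrite del_cst; apply/boolp.funeq2P => x y; rewrite !mul0r.
under boolp.eq2_fun do rewrite exprS.
rewrite (delM sF (smoothX k sF)) IH; apply/boolp.funeq2P => x y.
by case: k {IH} => [|k]; rewrite /= ?expr0 ?exprS; ring.
Qed.

Lemma delbX F k : smooth F ->
  delb (fun x y => F x y ^+ k) = fun x y => k%:R * F x y ^+ k.-1 * delb F x y.
Proof.
move=> sF; elim: k => [|k IH].
  under boolp.eq2_fun do rewrite expr0.
  by rewrite delb_cst; apply/boolp.funeq2P => x y; rewrite !mul0r.
under boolp.eq2_fun do rewrite exprS.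
rewrite (delbM sF (smoothX k sF)) IH; apply/boolp.funeq2P => x y.
by case: k {IH} => [|k]; rewrite /= ?expr0 ?exprS; ring.
Qed.

Lemma del_delb F : smooth F -> del (delb F) = delb (del F).
Proof.
move=> sF; have sFx := smooth_dx sF; have sFy := smooth_dy sF.
have siFy c : smooth (fun x y => c * dy F x y) by exact: smoothM (smooth_cst c) sFy.
have -> : delb F = fun x y => (dx F x y + 'i * dy F x y) * 2%:R^-1 by [].
have -> : del F = fun x y => (dx F x y + - 'i * dy F x y) * 2%:R^-1.
  by apply/boolp.funeq2P => x y; rewrite /del mulNr.
rewrite (delM (smoothD sFx (siFy _)) (smooth_cst _)) (delbM (smoothD sFx (siFy _)) (smooth_cst _)).
rewrite (delD sFx (siFy _)) (delbD sFx (siFy _)).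
rewrite (delM (smooth_cst _) sFy) (delbM (smooth_cst _) sFy).
rewrite !del_cst !delb_cst; apply/boolp.funeq2P => x y.
rewrite /del /delb (smooth_dxy sF).
by move: (dx (dx F) x y) (dy (dx F) x y) (dy (dy F) x y) => a b c; ring.
Qed.

Lemma mulii : 'i * 'i = -1 :> C.
Proof. by rewrite -expr2 sqr_i. Qed.

Definition zeta : R -> R -> C := fun x y => x +i* y.
Definition zetab : R -> R -> C := fun x y => conjc (zeta x y).

Lemma zetaE : zeta = fun x y => x%:C + 'i * y%:C.
Proof.
by apply/boolp.funeq2P => x y; exact: complexE (x +i* y).
Qed.

Lemma smooth_zeta : smooth zeta.
Proof.
rewrite zetaE; apply: smoothD; first exact: smooth_x.
by apply: smoothM; [exact: smooth_cst | exact: smooth_y].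
Qed.

Lemma smooth_zetab : smooth zetab.
Proof. exact: smoothJ smooth_zeta. Qed.

Lemma del_zeta : del zeta = fun _ _ => 1.
Proof.
rewrite zetaE (delD smooth_x (smoothM (smooth_cst _) smooth_y)).
rewrite (delM (smooth_cst _) smooth_y) del_cst.
apply/boolp.funeq2P => x y; rewrite /del dx_x dy_x dx_y dy_y.
by field: mulii.
Qed.

Lemma delb_zeta : delb zeta = fun _ _ => 0.
Proof.
rewrite zetaE (delbD smooth_x (smoothM (smooth_cst _) smooth_y)).
rewrite (delbM (smooth_cst _) smooth_y) delb_cst.
apply/boolp.funeq2P => x y; rewrite /delb dx_x dy_x dx_y dy_y.
by field: mulii.
Qed.

Lemma del_zetab : del zetab = fun _ _ => 0.
Proof.
by rewrite /zetab (delJ smooth_zeta) delb_zeta; apply/boolp.funeq2P => x y; exact: conjc0.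
Qed.

Lemma delb_zetab : delb zetab = fun _ _ => 1.
Proof.
by rewrite /zetab (delbJ smooth_zeta) del_zeta; apply/boolp.funeq2P => x y; exact: conjc1.
Qed.
End Wirtinger.

Arguments zeta {R}.
Arguments zetab {R}.
Arguments smooth_zeta {R}.
Arguments smooth_zetab {R}.

Section HermitianCalculus.
Variables (R : realType) (N : nat).
Local Notation C := R[i].
Local Notation vfield := (R -> R -> 'I_N -> C).
Implicit Types (u v w : 'I_N -> C) (g h : vfield).

Lemma conjc_sum (I : Type) (r : seq I) (F : I -> C) :
  conjc (\sum_(i <- r) F i) = \sum_(i <- r) conjc (F i).
Proof. exact: rmorph_sum. Qed.

Lemma herm_swap u v : herm v u = conjc (herm u v).
Proof. by rewrite /herm conjc_sum; apply: eq_bigr => i _; rewrite conjcM conjcK mulrC. Qed.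

Lemma herm_real u : conjc (herm u u) = herm u u.
Proof. by rewrite -herm_swap. Qed.

Lemma herm_subr u v w (s : C) : herm u (fun i => v i - w i * s) = herm u v - herm u w * s.
Proof. by rewrite /herm mulr_suml -sumrB; apply: eq_bigr => i _; rewrite mulrBr mulrA. Qed.

Lemma herm_subl u v w (s : C) : herm (fun i => v i - w i * s) u = herm v u - conjc s * herm w u.
Proof.
rewrite /herm mulr_sumr -sumrB; apply: eq_bigr => i _.
by rewrite conjcB conjcM mulrBl [conjc (w i) * _]mulrC -mulrA.
Qed.

Lemma herm_addr u v w (s : C) : herm u (fun i => v i + s * w i) = herm u v + s * herm u w.
Proof. by rewrite /herm mulr_sumr -big_split; apply: eq_bigr => i _; rewrite mulrDr mulrCA. Qed.

Lemma herm_scaler u v (s : C) : herm u (fun i => s * v i) = s * herm u v.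
Proof. by rewrite /herm mulr_sumr; apply: eq_bigr => i _; rewrite mulrCA. Qed.

Lemma herm_scalel u v (s : C) : herm (fun i => s * v i) u = conjc s * herm v u.
Proof. by rewrite /herm mulr_sumr; apply: eq_bigr => i _; rewrite conjcM mulrA. Qed.

Lemma herm0l u : herm (fun=> 0) u = 0.
Proof. by rewrite /herm big1 // => i _; rewrite conjc0 mul0r. Qed.

Definition smoothv g := forall i, smooth (fun x y => g x y i).
Definition vdelb g : vfield := fun x y i => delb (fun x' y' => g x' y' i) x y.
Definition hermf g h : R -> R -> C := fun x y => herm (g x y) (h x y).

Lemma smoothv_del g : smoothv g -> smoothv (vdel g).
Proof. by move=> sg i; exact: smooth_del. Qed.

Lemma smooth_herm g h : smoothv g -> smoothv h -> smooth (hermf g h).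
Proof. by move=> sg sh; apply: smooth_sum => i; apply: smoothM (sh i); exact: smoothJ. Qed.

Lemma del_herm g h : smoothv g -> smoothv h ->
  del (hermf g h) = fun x y => herm (vdelb g x y) (h x y) + herm (g x y) (vdel h x y).
Proof.
move=> sg sh; rewrite /hermf /herm.
rewrite (del_sum _ (fun i => smoothM (smoothJ (sg i)) (sh i))).
apply/boolp.funeq2P => x y; rewrite -big_split; apply: eq_bigr => i _.
by rewrite (delM (smoothJ (sg i)) (sh i)) (delJ (sg i)).
Qed.

Lemma delb_herm g h : smoothv g -> smoothv h ->
  delb (hermf g h) = fun x y => herm (vdel g x y) (h x y) + herm (g x y) (vdelb h x y).
Proof.
move=> sg sh; rewrite /hermf /herm.
rewrite (delb_sum _ (fun i => smoothM (smoothJ (sg i)) (sh i))).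
apply/boolp.funeq2P => x y; rewrite -big_split; apply: eq_bigr => i _.
by rewrite (delbM (smoothJ (sg i)) (sh i)) (delbJ (sg i)).
Qed.

Lemma vdel_vdelb g : smoothv g -> vdelb (vdel g) = vdel (vdelb g).
Proof. by move=> sg; apply/boolp.funeq3P => x y i; rewrite /vdelb /vdel del_delb. Qed.

End HermitianCalculus.

Section GramSchmidtStep.
Variables (R : realType) (N : nat).
Local Notation C := R[i].
Local Notation vfield := (R -> R -> 'I_N -> C).
Implicit Types (g h : vfield) (q : R -> R -> C).

Definition sqnorm g : R -> R -> C := hermf g g.
Definition mu g : R -> R -> C := fun x y => herm (g x y) (vdel g x y) / sqnorm g x y.

Lemma PplusE g x y : Pplus g x y = fun i => vdel g x y i - g x y i * mu g x y.
Proof. by []. Qed.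

Lemma smooth_sqnorm g : smoothv g -> smooth (sqnorm g).
Proof. by move=> sg; exact: smooth_herm. Qed.

Lemma smooth_mu g : smoothv g -> (forall x y, sqnorm g x y != 0) -> smooth (mu g).
Proof.
move=> sg g_neq0; apply: smoothM; first exact: smooth_herm (smoothv_del sg).
exact: smoothV g_neq0 (smooth_sqnorm sg).
Qed.

Lemma smoothv_Pplus g : smoothv g -> (forall x y, sqnorm g x y != 0) -> smoothv (Pplus g).
Proof.
move=> sg g_neq0 i; apply: smoothB; first exact: smoothv_del.
exact: smoothM (sg i) (smooth_mu sg g_neq0).
Qed.

Lemma del_sqnorm g h q : smoothv g ->
  vdelb g = (fun x y i => - q x y * h x y i) -> (forall x y, herm (h x y) (g x y) = 0) ->
  del (sqnorm g) = hermf g (vdel g).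
Proof.
move=> sg dg hg; rewrite /sqnorm (del_herm sg sg) dg.
by apply/boolp.funeq2P => x y; rewrite herm_scalel hg mulr0 add0r.
Qed.

Lemma delb_sqnorm g h q : smoothv g ->
  vdelb g = (fun x y i => - q x y * h x y i) -> (forall x y, herm (h x y) (g x y) = 0) ->
  delb (sqnorm g) = fun x y => conjc (hermf g (vdel g) x y).
Proof.
move=> sg dg hg; rewrite /sqnorm (delb_herm sg sg) dg.
apply/boolp.funeq2P => x y.
by rewrite herm_scaler [herm (g x y) _]herm_swap hg conjc0 mulr0 addr0 /hermf herm_swap.
Qed.

(* One step of the recursion: these relations, which f_0 satisfies with h = 0, pass
   from g to P_+ g with h := g and q := |P_+ g|^2 / |g|^2. *)
Section Step.
Variables (g h : vfield) (q : R -> R -> C).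
Hypotheses (sg : smoothv g) (g_neq0 : forall x y, sqnorm g x y != 0).
Hypothesis delb_g : vdelb g = fun x y i => - q x y * h x y i.
Hypothesis h_perp_g : forall x y, herm (h x y) (g x y) = 0.
Hypothesis del_delb_g :
  vdel (vdelb g) = fun x y i => - q x y * (g x y i + mu g x y * h x y i).

Lemma herm_Pplus x y : herm (g x y) (Pplus g x y) = 0.
Proof.
rewrite PplusE herm_subr /mu.
by move: (g_neq0 x y); rewrite /sqnorm /hermf => n_neq0; field.
Qed.

Lemma sqnorm_Pplus x y : sqnorm (Pplus g) x y = sqnorm g x y * (delb (mu g) x y + q x y).
Proof.
have sn := smooth_sqnorm sg; have sh := smooth_herm sg (smoothv_del sg).
have -> : mu g = fun x y => hermf g (vdel g) x y * (sqnorm g x y)^-1 by [].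
rewrite (delbM sh (smoothV g_neq0 sn)) (delbV g_neq0 sn) (delb_sqnorm sg delb_g h_perp_g).
rewrite /hermf (delb_herm sg (smoothv_del sg)) (vdel_vdelb sg) del_delb_g herm_scaler.
rewrite herm_addr [herm (g x y) (h x y)]herm_swap h_perp_g conjc0 mulr0 addr0.
rewrite /sqnorm /hermf PplusE herm_subl !herm_subr (herm_swap (g x y) (vdel g x y)).
rewrite /mu conjcM conjc_inv /sqnorm /hermf herm_real.
move: (g_neq0 x y); rewrite /sqnorm /hermf.
move: (herm (g x y) (g x y)) (herm (g x y) (vdel g x y)) (herm (vdel g x y) (vdel g x y)).
move=> n d dd n_neq0.
by field.
Qed.

Lemma delb_Pplus :
  vdelb (Pplus g) = fun x y i => - (sqnorm (Pplus g) x y / sqnorm g x y) * g x y i.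
Proof.
have sm := smooth_mu sg g_neq0.
apply/boolp.funeq3P => x y i; rewrite /vdelb.
have -> : (fun x' y' => Pplus g x' y' i) =
  fun x' y' => vdel g x' y' i - g x' y' i * mu g x' y' by [].
rewrite (delbD (smoothv_del sg i) (smoothN (smoothM (sg i) sm))).
rewrite (delbN (smoothM (sg i) sm)) (delbM (sg i) sm).
have -> : delb (fun a b => vdel g a b i) x y = vdel (vdelb g) x y i by rewrite -(vdel_vdelb sg).
have -> : delb (fun a b => g a b i) x y = vdelb g x y i by [].
rewrite del_delb_g delb_g sqnorm_Pplus.
move: (g_neq0 x y) => n_neq0.
move: (sqnorm g x y) (mu g x y) (delb (mu g) x y) (q x y) (g x y i) (h x y i) n_neq0.
move=> n m dm qq a b n0.
by field.
Qed.

Hypothesis Pplus_neq0 : forall x y, sqnorm (Pplus g) x y != 0.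

Lemma del_delb_Pplus : vdel (vdelb (Pplus g)) =
  fun x y i => - (sqnorm (Pplus g) x y / sqnorm g x y) *
                (Pplus g x y i + mu (Pplus g) x y * g x y i).
Proof.
have sgn := smoothv_Pplus sg g_neq0.
have snn := smooth_sqnorm sgn; have sn := smooth_sqnorm sg; have sV := smoothV g_neq0 sn.
apply/boolp.funeq3P => x y i; rewrite delb_Pplus /vdel.
rewrite (delM (smoothN (smoothM snn sV)) (sg i)) (delN (smoothM snn sV)) (delM snn sV).
rewrite (delV g_neq0 sn) (del_sqnorm sg delb_g h_perp_g).
rewrite (del_sqnorm sgn delb_Pplus herm_Pplus).
have -> : del (fun a b => g a b i) x y = Pplus g x y i + g x y i * mu g x y.
  by rewrite PplusE subrK.
rewrite /mu /sqnorm /hermf.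
move: (g_neq0 x y) (Pplus_neq0 x y); rewrite /sqnorm /hermf.
move: (herm (g x y) (g x y)) (herm (Pplus g x y) (Pplus g x y)) (herm (g x y) (vdel g x y))
  (herm (Pplus g x y) (vdel (Pplus g) x y)) (Pplus g x y i) (g x y i) => n nn d dd a b n0 nn0.
by field; rewrite n0 nn0.
Qed.

End Step.

Lemma herm_Pplus_eq0 g (w w' : vfield) (c : R -> R -> C) : smoothv g -> smoothv w ->
  vdelb w = (fun x y i => c x y * w' x y i) ->
  (forall x y, herm (w' x y) (g x y) = 0) -> (forall x y, herm (w x y) (g x y) = 0) ->
  forall x y, herm (w x y) (Pplus g x y) = 0.
Proof.
move=> sg sw dw w'g wg x y.
rewrite PplusE herm_subr wg mul0r subr0.
(* Differentiate w^dagger g = 0; the term with dbar w drops out since w' _|_ g. *)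
have /(congr1 (fun F => F x y)) : del (hermf w g) = fun _ _ => 0.
  by rewrite -(del_cst (0 : C)); congr del; apply/boolp.funeq2P => a b; exact: wg.
by rewrite (del_herm sw sg) dw /= herm_scalel w'g mulr0 add0r.
Qed.

End GramSchmidtStep.

Section ConformalFactor.
Variable R : realType.
Local Notation C := R[i].

Definition rho (x y : R) : R := 1 + x ^+ 2 + y ^+ 2.
Definition crho (x y : R) : C := (rho x y)%:C.

Lemma rho_gt0 x y : 0 < rho x y.
Proof. by rewrite /rho; have := sqr_ge0 x; have := sqr_ge0 y; lra. Qed.

Lemma crho_neq0 x y : crho x y != 0.
Proof. by rewrite /crho fmorph_eq0 gt_eqF ?rho_gt0. Qed.

Lemma conformalE (a : R) x y : (a / rho x y ^+ 2)%:C = a%:C * ((crho x y)^-1 * (crho x y)^-1).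
Proof. by rewrite rmorphM fmorphV rmorphXn expr2 invfM. Qed.

Lemma crhoE : crho = fun x y => 1 + zeta x y * zetab x y.
Proof.
apply/boolp.funeq2P => x y; rewrite /crho /rho /zetab /zeta /=.
by apply/eqP; rewrite eq_complex /=; apply/andP; split; apply/eqP; ring.
Qed.

Lemma smooth_crho : smooth crho.
Proof.
by rewrite crhoE; apply: smoothD (smooth_cst _) (smoothM smooth_zeta smooth_zetab).
Qed.

Lemma del_crho : del crho = zetab.
Proof.
rewrite crhoE (delD (smooth_cst _) (smoothM smooth_zeta smooth_zetab)).
rewrite (delM smooth_zeta smooth_zetab) del_cst del_zeta del_zetab.
by apply/boolp.funeq2P => x y; rewrite add0r mul1r mulr0 addr0.
Qed.

Lemma delb_crho : delb crho = zeta.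
Proof.
rewrite crhoE (delbD (smooth_cst _) (smoothM smooth_zeta smooth_zetab)).
rewrite (delbM smooth_zeta smooth_zetab) delb_cst delb_zeta delb_zetab.
by apply/boolp.funeq2P => x y; rewrite add0r mul0r mulr1 add0r.
Qed.

Lemma smooth_crhoV : smooth (fun x y => (crho x y)^-1).
Proof. exact: smoothV crho_neq0 smooth_crho. Qed.

Lemma del_crhoV :
  del (fun x y => (crho x y)^-1) = fun x y => - zetab x y * ((crho x y)^-1 * (crho x y)^-1).
Proof. by rewrite (delV crho_neq0 smooth_crho) del_crho. Qed.

Lemma delb_crhoV :
  delb (fun x y => (crho x y)^-1) = fun x y => - zeta x y * ((crho x y)^-1 * (crho x y)^-1).
Proof. by rewrite (delbV crho_neq0 smooth_crho) delb_crho. Qed.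

Lemma delb_zetab_crhoV :
  delb (fun x y => zetab x y * (crho x y)^-1) = fun x y => (crho x y)^-1 * (crho x y)^-1.
Proof.
rewrite (delbM smooth_zetab smooth_crhoV) delb_zetab delb_crhoV crhoE.
apply/boolp.funeq2P => x y.
have := crho_neq0 x y; rewrite crhoE.
by move: (zeta x y) (zetab x y) => z zb nz; field.
Qed.

Lemma del_zeta_crhoV :
  del (fun x y : R => zeta x y * (crho x y)^-1) = fun x y => (crho x y)^-1 * (crho x y)^-1.
Proof.
rewrite (delM smooth_zeta smooth_crhoV) del_zeta del_crhoV crhoE.
apply/boolp.funeq2P => x y.
have := crho_neq0 x y; rewrite crhoE.
by move: (zeta x y) (zetab x y) => z zb nz; field.
Qed.

End ConformalFactor.

Arguments smooth_crho {R}.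
Arguments smooth_crhoV {R}.

Lemma natr_mul_exprP (F : fieldType) (a : F) n : a != 0 ->
  n%:R * a ^+ n.-1 = n%:R * a ^+ n / a.
Proof. by move=> a0; case: n => [|n]; rewrite ?mul0r // exprS; field. Qed.

Section VeroneseNorms.
Variables (R : realType) (m : nat).
Local Notation C := R[i].

Definition lam k : R := k.+1%:R * (m%:R - k%:R).
Definition lam_pred k : R := if k is k'.+1 then lam k' else 0.
Definition cnorm k : R := \prod_(j < k) lam j.
Definition vnorm k : R -> R -> C :=
  fun x y => (cnorm k)%:C * (crho x y ^+ m * (crho x y)^-1 ^+ (2 * k)).
Definition qcoef k : R -> R -> C :=
  fun x y => (lam_pred k)%:C * ((crho x y)^-1 * (crho x y)^-1).

Lemma lam_gt0 k : (k < m)%N -> 0 < lam k.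
Proof. by move=> km; rewrite mulr_gt0 ?ltr0n // subr_gt0 ltr_nat. Qed.

Lemma cnorm_gt0 k : (k <= m)%N -> 0 < cnorm k.
Proof. by move=> km; apply: prodr_gt0 => j _; apply: lam_gt0; exact: leq_trans (ltn_ord j) km. Qed.

Lemma lam_predE k : m%:R - (2 * k)%:R + lam_pred k = lam k.
Proof. by case: k => [|k]; rewrite /lam_pred /lam ?muln0 ?natrM; ring. Qed.

Lemma vnorm_neq0 k : (k <= m)%N -> forall x y, vnorm k x y != 0.
Proof.
move=> km x y; rewrite /vnorm !mulf_neq0 ?expf_neq0 ?invr_eq0 ?crho_neq0 //.
by rewrite fmorph_eq0 gt_eqF ?cnorm_gt0.
Qed.

Lemma vnormS k x y : vnorm k.+1 x y = vnorm k x y * ((lam k)%:C * ((crho x y)^-1 * (crho x y)^-1)).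
Proof.
rewrite /vnorm /cnorm big_ord_recr rmorphM mulnS exprD expr2 /=.
by move: (cnorm k)%:C => c; ring.
Qed.

Lemma del_vnorm k :
  del (vnorm k) = fun x y => vnorm k x y * ((m%:R - (2 * k)%:R) * (zetab x y * (crho x y)^-1)).
Proof.
rewrite (delM (smooth_cst _) (smoothM (smoothX m smooth_crho) (smoothX (2 * k) smooth_crhoV))).
rewrite del_cst (delM (smoothX m smooth_crho) (smoothX (2 * k) smooth_crhoV)).
rewrite (delX m smooth_crho) (delX (2 * k) smooth_crhoV) del_crho del_crhoV.
apply/boolp.funeq2P => x y; rewrite /vnorm.
have r0 := crho_neq0 x y; have rV0 : (crho x y)^-1 != 0 by rewrite invr_eq0.
rewrite (natr_mul_exprP m r0) (natr_mul_exprP (2 * k) rV0) invrK.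
move: (crho x y) (zetab x y) (crho x y ^+ m) ((crho x y)^-1 ^+ (2 * k)) r0 => r z a b r0.
by field.
Qed.
End VeroneseNorms.

Section VeroneseSequence.
Variables (R : realType) (m : nat).
Local Notation C := R[i].
Local Notation vfield := (R -> R -> 'I_m.+1 -> C).

Local Notation f := (@Pk R m.+1).

Definition Pk_pred k : vfield := if k is k'.+1 then f k' else fun _ _ _ => 0.

Lemma f0E (i : 'I_m.+1) :
  (fun x y => f 0 x y i) = fun x y => (Num.sqrt ('C(m, i))%:R)%:C * zeta x y ^+ i.
Proof. by []. Qed.

Lemma smoothv_f0 : smoothv (f 0).
Proof. by move=> i; rewrite f0E; apply: smoothM (smooth_cst _) (smoothX i smooth_zeta). Qed.

Lemma vdelb_f0 : vdelb (f 0) = fun _ _ _ => 0.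
Proof.
apply/boolp.funeq3P => x y i; rewrite /vdelb f0E.
rewrite (delbM (smooth_cst _) (smoothX i smooth_zeta)) delb_cst (delbX i smooth_zeta) delb_zeta.
by rewrite !mulr0 mul0r addr0.
Qed.

Lemma sqnorm_f0 x y : sqnorm (f 0) x y = vnorm m 0 x y.
Proof.
rewrite /sqnorm /hermf /herm /vnorm /cnorm big_ord0 mul1r muln0 expr0 mulr1.
rewrite crhoE addrC mulrC exprD1n; apply: eq_bigr => i _.
rewrite /Pk /= /veronese conjcM conjc_real rmorphXn /= -/(zeta x y) -/(zetab x y).
by rewrite mulrACA -rmorphM -expr2 sqr_sqrtr ?ler0n // rmorph_nat exprMn mulr_natl mulrC.
Qed.

Record veronese_facts k : Prop := VeroneseFacts {
  smoothv_f : smoothv (f k);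
  sqnorm_f : forall x y, sqnorm (f k) x y = vnorm m k x y;
  vdelb_f : vdelb (f k) = fun x y i => - qcoef m k x y * Pk_pred k x y i;
  herm_Pk_pred_f : forall x y, herm (Pk_pred k x y) (f k x y) = 0;
  vdel_vdelb_f : vdel (vdelb (f k)) =
    fun x y i => - qcoef m k x y * (f k x y i + mu (f k) x y * Pk_pred k x y i);
  herm_f_lt : forall j, (j < k)%N -> forall x y, herm (f j x y) (f k x y) = 0 }.

Lemma veronese_facts0 : veronese_facts 0.
Proof.
split => //.
- exact: smoothv_f0.
- exact: sqnorm_f0.
- by rewrite vdelb_f0; apply/boolp.funeq3P => x y i; rewrite mulr0.
- by move=> x y; exact: herm0l.
- rewrite vdelb_f0; apply/boolp.funeq3P => x y i.
  by rewrite /vdel del_cst /qcoef /lam_pred /= !mul0r oppr0 mul0r.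
Qed.

Section InductionStep.
Variable k : nat.
Hypotheses (km : (k < m)%N) (fk : veronese_facts k).

Let fk_neq0 x y : sqnorm (f k) x y != 0.
Proof. by rewrite (sqnorm_f fk) vnorm_neq0 // ltnW. Qed.

Lemma mu_f : mu (f k) = fun x y => (m%:R - (2 * k)%:R) * (zetab x y * (crho x y)^-1).
Proof.
apply/boolp.funeq2P => x y.
have -> : mu (f k) x y = del (sqnorm (f k)) x y / sqnorm (f k) x y.
  by rewrite (del_sqnorm (smoothv_f fk) (vdelb_f fk) (herm_Pk_pred_f fk)).
have -> : sqnorm (f k) = vnorm m k by apply/boolp.funeq2P => x' y'; rewrite (sqnorm_f fk).
by rewrite del_vnorm mulrAC mulfV ?mul1r // vnorm_neq0 // ltnW.
Qed.

Lemma sqnorm_fS x y : sqnorm (f k.+1) x y = vnorm m k.+1 x y.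
Proof.
have [sg nE dbg hg ddg _] := fk.
rewrite (sqnorm_Pplus sg fk_neq0 dbg hg ddg) mu_f.
rewrite (delbM (smooth_cst _) (smoothM smooth_zetab smooth_crhoV)) delb_cst delb_zetab_crhoV.
rewrite nE vnormS /qcoef -(lam_predE R m k).
have -> : (m%:R - (2 * k)%:R + lam_pred R m k)%:C =
    m%:R - (2 * k)%:R + (lam_pred R m k)%:C :> C by rewrite rmorphD rmorphB !rmorph_nat.
by ring.
Qed.

Lemma veronese_factsS : (forall j, (j < k)%N -> veronese_facts j) -> veronese_facts k.+1.
Proof.
move=> IH; have [sg nE dbg hg ddg og] := fk.
have nS_neq0 x y : sqnorm (f k.+1) x y != 0 by rewrite sqnorm_fS vnorm_neq0.
have ratio x y : sqnorm (f k.+1) x y / sqnorm (f k) x y = qcoef m k.+1 x y.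
  by rewrite sqnorm_fS nE vnormS mulrAC mulfV ?mul1r // vnorm_neq0 // ltnW.
split.
- exact: smoothv_Pplus.
- exact: sqnorm_fS.
- rewrite (delb_Pplus sg fk_neq0 dbg hg ddg).
  by apply/boolp.funeq3P => x y i; rewrite ratio.
- exact: herm_Pplus.
- rewrite (del_delb_Pplus sg fk_neq0 dbg hg ddg nS_neq0).
  by apply/boolp.funeq3P => x y i; rewrite ratio.
move=> j; rewrite ltnS leq_eqVlt => /orP[/eqP -> | jk]; first exact: herm_Pplus.
have [sj _ dbj _ _ _] := IH j jk.
have hj x y : herm (Pk_pred j x y) (f k x y) = 0.
  by case: j jk {sj dbj} => [|j] jk /=; [exact: herm0l | apply: og; exact: ltnW].
exact: herm_Pplus_eq0 sg sj dbj hj (og j jk).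
Qed.

End InductionStep.

Lemma veronese_factsP k : (k <= m)%N -> veronese_facts k.
Proof.
elim/ltn_ind: k => -[_ _|k IH km]; first exact: veronese_facts0.
apply: (veronese_factsS km (IH k (ltnSn k) (ltnW km))) => j jk.
exact: IH (ltnW jk) (leq_trans (ltnW jk) (ltnW km)).
Qed.
End VeroneseSequence.

Section MatrixFields.
Variables (R : realType) (N : nat).
Local Notation C := R[i].
Implicit Types (u v w z : 'I_N -> C).

Definition dyad u v : 'M[C]_N := \matrix_(i, j) (u i * conjc (v j)).

Lemma mxtrace_dyadM u v w z : \tr (dyad u v *m dyad w z) = herm v w * herm z u.
Proof.
rewrite /mxtrace /herm mulrC big_distrl; apply: eq_bigr => i _ /=.
rewrite mxE big_distrr; apply: eq_bigr => l _ /=.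
by rewrite !mxE; ring.
Qed.

(* [raddf_sum] for [mxtrace], stated so that rewriting keeps [\tr] as the head symbol. *)
Lemma mxtrace_sum (I : Type) (r : seq I) (A : I -> 'M[C]_N) :
  \tr (\sum_(i <- r) A i) = \sum_(i <- r) \tr (A i).
Proof. exact: raddf_sum. Qed.

Lemma mxtrace_sumM (p : nat) (a b : 'I_p -> C) (X Y : 'I_p -> 'M[C]_N) :
  \tr ((\sum_(j < p) a j *: X j) *m (\sum_(k < p) b k *: Y k)) =
  \sum_(j < p) \sum_(k < p) a j * b k * \tr (X j *m Y k).
Proof.
rewrite mulmx_suml mxtrace_sum; apply: eq_bigr => j _.
rewrite mulmx_sumr mxtrace_sum; apply: eq_bigr => k _.
by rewrite -scalemxAl -scalemxAr !mxtraceZ mulrA.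
Qed.

Lemma mdelb_hermitian (M : R -> R -> 'M[C]_N) x y i j :
  (forall i j, smooth (fun x y => M x y i j)) ->
  (forall x y i j, M x y j i = conjc (M x y i j)) ->
  mdelb M x y i j = conjc (mdel M x y j i).
Proof.
move=> sM hM; rewrite !mxE.
have -> : (fun x y => M x y i j) = fun x y => conjc (M x y j i).
  by apply/boolp.funeq2P => a b; rewrite hM.
by rewrite (delbJ (sM j i)).
Qed.

End MatrixFields.

Section ProjectorDerivative.
Variables (R : realType) (N : nat).
Local Notation C := R[i].
Variables (g h : R -> R -> 'I_N -> C) (q : R -> R -> C).
Hypotheses (sg : smoothv g) (g_neq0 : forall x y, sqnorm g x y != 0).
Hypothesis delb_g : vdelb g = fun x y i => - q x y * h x y i.
Hypothesis h_perp_g : forall x y, herm (h x y) (g x y) = 0.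
Hypothesis q_real : forall x y, conjc (q x y) = q x y.

Lemma projE i j : (fun x y => proj g x y i j) =
  fun x y => g x y i * conjc (g x y j) * (sqnorm g x y)^-1.
Proof. by apply/boolp.funeq2P => x y; rewrite mxE. Qed.

Lemma smooth_proj i j : smooth (fun x y => proj g x y i j).
Proof.
rewrite projE; apply: smoothM; first exact: smoothM (sg i) (smoothJ (sg j)).
exact: smoothV g_neq0 (smooth_sqnorm sg).
Qed.

Lemma proj_hermitian x y i j : proj g x y j i = conjc (proj g x y i j).
Proof.
rewrite !mxE !conjcM conjcK conjc_inv.
by rewrite [conjc (herm _ _)]herm_real [conjc (g x y i) * _]mulrC.
Qed.

Lemma mdel_proj x y : mdel (proj g) x y =
  (sqnorm g x y)^-1 *: (dyad (Pplus g x y) (g x y) - q x y *: dyad (g x y) (h x y)).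
Proof.
have sn := smooth_sqnorm sg.
apply/matrixP => i j; rewrite [LHS]mxE projE.
rewrite (delM (smoothM (sg i) (smoothJ (sg j))) (smoothV g_neq0 sn)).
rewrite (delM (sg i) (smoothJ (sg j))) (delJ (sg j)) (delV g_neq0 sn).
rewrite (del_sqnorm sg delb_g h_perp_g).
have -> : del (fun a b => g a b i) x y = Pplus g x y i + g x y i * mu g x y.
  by rewrite PplusE subrK.
have -> : delb (fun a b => g a b j) x y = - q x y * h x y j.
  exact: (congr1 (fun F => F x y j) delb_g).
rewrite !mxE conjcM conjcN q_real /mu.
move: (g_neq0 x y); rewrite /sqnorm /hermf => n0.
by field.
Qed.

End ProjectorDerivative.

Lemma sum_by_parts (K : pzRingType) (V : lmodType K) (a : nat -> K) (A : nat -> V) n :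
  \sum_(k < n) a k *: (A k - (if (k : nat) is k'.+1 then A k' else 0)) =
  \sum_(k < n) (a k - a k.+1) *: A k + a n *: (if n is n'.+1 then A n' else 0).
Proof.
elim: n => [|n IH]; first by rewrite !big_ord0 scaler0 addr0.
rewrite !big_ord_recr /= IH scalerBl scalerBr.
by rewrite -!addrA; congr (_ + _); rewrite addNr addr0 addrC subrK.
Qed.

Section MetricComponents.
Variables (R : realType) (m : nat) (alpha : 'I_m -> R).
Local Notation C := R[i].
Local Notation f := (@Pk R m.+1).
Local Notation bbP := (@bbP R m.+1 alpha).

Lemma herm_f_eq0 a b x y : (a <= m)%N -> (b <= m)%N -> a != b ->
  herm (f a x y) (f b x y) = 0.
Proof.
move=> am bm; case: ltngtP => [ab|ba|//] _.
- exact: (herm_f_lt (veronese_factsP R bm) ab).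
- by rewrite herm_swap (herm_f_lt (veronese_factsP R am) ba) conjc0.
Qed.

Lemma sqnorm_f_neq0 k : (k <= m)%N -> forall x y, sqnorm (f k) x y != 0.
Proof. by move=> km x y; rewrite (sqnorm_f (veronese_factsP R km)) vnorm_neq0. Qed.

Lemma qcoef_real k (x y : R) : conjc (qcoef m k x y) = qcoef m k x y.
Proof. by rewrite /qcoef !conjcM conjc_real conjc_inv /crho conjc_real. Qed.

Definition Amx k x y : 'M[C]_m.+1 := (sqnorm (f k) x y)^-1 *: dyad (f k.+1 x y) (f k x y).
Definition Amx_adj k x y : 'M[C]_m.+1 := (sqnorm (f k) x y)^-1 *: dyad (f k x y) (f k.+1 x y).

Lemma mdel_Pmat k x y : (k < m)%N ->
  mdel (@Pmat R m.+1 k) x y = Amx k x y - (if k is k'.+1 then Amx k' x y else 0).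
Proof.
move=> km; have [sg nE dbg hg _ _] := veronese_factsP R (ltnW km).
rewrite /Pmat (mdel_proj sg (sqnorm_f_neq0 (ltnW km)) dbg hg (qcoef_real k)).
case: k km {sg dbg hg} nE => [|k] km nE.
  have -> : qcoef m 0 x y = 0 by rewrite /qcoef rmorph0 mul0r.
  by rewrite scale0r !subr0.
rewrite scalerBr scalerA /Amx !nE vnormS /qcoef -[lam_pred R m k.+1]/(lam R m k).
rewrite -(sqnorm_f (veronese_factsP R (ltnW (ltnW km)))).
have lam0 : (lam R m k)%:C != 0 by rewrite fmorph_eq0 gt_eqF // lam_gt0 // ltnW.
congr (_ *: _ - _ *: _); move: (sqnorm_f_neq0 (ltnW (ltnW km)) x y) (crho_neq0 x y) lam0.
move: (sqnorm _ x y) (crho x y) (lam R m k)%:C => n r l n0 r0 l0.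
by field; rewrite n0 r0 l0.
Qed.

Definition alpha_ext k : R := oapp alpha 0 (insub k).
Definition dalpha k : R := alpha_ext k - alpha_ext k.+1.

Lemma alpha_ext_ord (k : 'I_m) : alpha_ext k = alpha k.
Proof. by rewrite /alpha_ext valK. Qed.

Lemma alpha_ext_m : alpha_ext m = 0.
Proof. by rewrite /alpha_ext insubN ?ltnn. Qed.

Lemma bbP_entry i j :
  (fun x y => bbP x y i j) = fun x y => \sum_(k < m) (alpha k)%:C * @Pmat R m.+1 k x y i j.
Proof. by apply/boolp.funeq2P => x y; rewrite summxE; apply: eq_bigr => k _; rewrite mxE. Qed.

Lemma smooth_Pmat k i j : (k <= m)%N -> smooth (fun x y => @Pmat R m.+1 k x y i j).
Proof.
move=> km; have [sg _ _ _ _ _] := veronese_factsP R km.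
exact: smooth_proj sg (sqnorm_f_neq0 km) i j.
Qed.

Lemma smooth_bbP i j : smooth (fun x y => bbP x y i j).
Proof.
rewrite bbP_entry; apply: smooth_sum => k; apply: smoothM (smooth_cst _) _.
exact: smooth_Pmat (ltnW (ltn_ord k)).
Qed.

Lemma mdel_bbP x y : mdel bbP x y = \sum_(k < m) (dalpha k)%:C *: Amx k x y.
Proof.
have -> : mdel bbP x y = \sum_(k < m) (alpha k)%:C *: mdel (@Pmat R m.+1 k) x y.
  apply/matrixP => i j; rewrite mxE summxE bbP_entry.
  rewrite del_sum => [|k]; last exact: smoothM (smooth_cst _) (smooth_Pmat _ _ (ltnW (ltn_ord k))).
  apply: eq_bigr => k _; rewrite (delM (smooth_cst _) (smooth_Pmat _ _ (ltnW (ltn_ord k)))).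
  by rewrite del_cst mul0r add0r !mxE.
under eq_bigr => k _ do rewrite mdel_Pmat // -alpha_ext_ord.
rewrite (sum_by_parts (fun k => (alpha_ext k)%:C) (fun k => Amx k x y)).
rewrite alpha_ext_m rmorph0 scale0r addr0.
by apply: eq_bigr => k _; rewrite /dalpha rmorphB.
Qed.

Lemma bbP_hermitian x y i j : bbP x y j i = conjc (bbP x y i j).
Proof.
rewrite !summxE conjc_sum; apply: eq_bigr => k _.
rewrite !mxE conjcM conjc_real; congr (_ * _).
by have := proj_hermitian (f k) x y i j; rewrite !mxE.
Qed.

Lemma mdelb_bbP x y : mdelb bbP x y = \sum_(k < m) (dalpha k)%:C *: Amx_adj k x y.
Proof.
apply/matrixP => i j; rewrite (mdelb_hermitian x y i j smooth_bbP bbP_hermitian).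
rewrite mdel_bbP !summxE conjc_sum; apply: eq_bigr => k _.
rewrite !mxE !conjcM conjc_real conjc_inv conjcK /sqnorm /hermf herm_real.
by rewrite [conjc (f k.+1 x y j) * _]mulrC.
Qed.

Lemma gpp_bbP x y : gpp bbP x y = 0.
Proof.
rewrite /gpp mdel_bbP mxtrace_sumM; apply: big1 => j _; apply: big1 => k _.
rewrite /Amx -scalemxAl -scalemxAr !mxtraceZ mxtrace_dyadM.
have jm := ltn_ord j; have km := ltn_ord k.
have [jk | jk] := eqVneq (j : nat) k.+1.
  have kj : k != j.+1 :> nat by rewrite jk ltn_eqF // ltnW.
  by rewrite (herm_f_eq0 x y (ltnW km) jm kj) !mulr0.
by rewrite (herm_f_eq0 x y (ltnW jm) km jk) !mul0r !mulr0.
Qed.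

Lemma gpm_bbP x y :
  gpm bbP x y = (\sum_(k < m) dalpha k ^+ 2 * lam R m k)%:C * ((crho x y)^-1 * (crho x y)^-1).
Proof.
rewrite /gpm mdel_bbP mdelb_bbP mxtrace_sumM rmorph_sum big_distrl; apply: eq_bigr => j _.
have jm := ltn_ord j.
rewrite (bigD1 j) //= big1 ?addr0 => [|k kj]; last first.
  rewrite /Amx /Amx_adj -scalemxAl -scalemxAr !mxtraceZ mxtrace_dyadM.
  by rewrite (herm_f_eq0 x y (ltnW jm) (ltnW (ltn_ord k))) ?mul0r ?mulr0 // eq_sym.
rewrite /Amx /Amx_adj -scalemxAl -scalemxAr !mxtraceZ mxtrace_dyadM.
rewrite -[herm (f j x y) (f j x y)]/(sqnorm (f j) x y).
rewrite -[herm (f j.+1 x y) (f j.+1 x y)]/(sqnorm (f j.+1) x y).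
rewrite (sqnorm_f (veronese_factsP R jm)) (sqnorm_f (veronese_factsP R (ltnW jm))) vnormS.
have -> : (dalpha j ^+ 2 * lam R m j)%:C = (dalpha j)%:C ^+ 2 * (lam R m j)%:C :> C.
  by rewrite rmorphM rmorphXn.
move: (vnorm_neq0 (ltnW jm) x y) (crho_neq0 x y).
move: (vnorm m j x y) (crho x y) (dalpha j)%:C (lam R m j)%:C => n r b l n0 r0.
by field; rewrite n0 r0.
Qed.

Lemma alpha_ext_telescope k : (k <= m)%N -> alpha_ext k = \sum_(k <= j < m) dalpha j.
Proof.
move=> km; rewrite (@telescope_sumr_eq _ k m (fun j => - alpha_ext j) dalpha km).
  by rewrite alpha_ext_m oppr0 sub0r opprK.
by move=> j _; rewrite /dalpha opprK addrC.
Qed.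

Lemma sum_dalpha_lam_gt0 : (exists k, alpha k != 0) -> 0 < \sum_(k < m) dalpha k ^+ 2 * lam R m k.
Proof.
move=> [k0 ak0].
have ge0 (k : 'I_m) : 0 <= dalpha k ^+ 2 * lam R m k by rewrite mulr_ge0 ?sqr_ge0 // ltW ?lam_gt0.
case: (pickP (fun k : 'I_m => dalpha k != 0)) => [k bk | dalpha0].
  rewrite (bigD1 k) //= ltr_pwDl ?sumr_ge0 // mulr_gt0 ?lam_gt0 //.
  by rewrite lt_def sqr_ge0 sqrf_eq0 bk.
move: ak0; rewrite -alpha_ext_ord (alpha_ext_telescope (ltnW (ltn_ord k0))).
rewrite big_nat big1 ?eqxx // => j /andP[_ jm].
by have /negbFE/eqP := dalpha0 (Ordinal jm).
Qed.

End MetricComponents.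

Section Curvature.
Variable R : realType.
Local Notation C := R[i].

Lemma delb_ln (u : R -> R -> R) : (forall x y, 0 < u x y) -> smooth (fun x y => (u x y)%:C) ->
  delb (fun x y => (ln (u x y))%:C) = fun x y => delb (fun x y => (u x y)%:C) x y / (u x y)%:C.
Proof.
move=> u_gt0 /smooth_pderivable du; apply/boolp.funeq2P => x y.
rewrite /delb !dxE !dyE (cderive_ln (u_gt0 x y) (du x y).1.1) (cderive_ln (u_gt0 x y) (du x y).2.1).
have u0 : (u x y)%:C != 0 :> C by rewrite fmorph_eq0 gt_eqF.
move: (cderive _ x) (cderive _ y) u0 => a b u0.
by field.
Qed.

Lemma delb_ln_conformal (a : R) : 0 < a ->
  delb (fun x y => (ln (a / rho x y ^+ 2))%:C) = fun x y => -2%:R * (zeta x y * (crho x y)^-1).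
Proof.
move=> a_gt0; have a0 : a%:C != 0 :> C by rewrite fmorph_eq0 gt_eqF.
have gE : (fun x y => (a / rho x y ^+ 2)%:C) =
    fun x y => a%:C * ((crho x y)^-1 * (crho x y)^-1).
  by apply/boolp.funeq2P => x y; exact: conformalE.
have sg : smooth (fun x y => (a / rho x y ^+ 2)%:C).
  by rewrite gE; apply: smoothM (smooth_cst _) (smoothM smooth_crhoV smooth_crhoV).
rewrite (delb_ln _ sg) => [|x y]; last by rewrite divr_gt0 ?exprn_gt0 ?rho_gt0.
rewrite gE (delbM (smooth_cst _) (smoothM smooth_crhoV smooth_crhoV)) delb_cst.
rewrite (delbM smooth_crhoV smooth_crhoV) delb_crhoV.
apply/boolp.funeq2P => x y; rewrite conformalE; move: (crho_neq0 x y).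
by move: (crho x y) (zeta x y) => r z r0; field; rewrite a0 r0.
Qed.

Lemma curvature_conformal (N : nat) (M : R -> R -> 'M[C]_N) (a : R) : 0 < a ->
  (forall x y, gpm M x y = (a / rho x y ^+ 2)%:C) ->
  forall x y, curvature M x y = (8%:R / a)%:C.
Proof.
move=> a_gt0 gpmE x y; have a0 : a%:C != 0 :> C by rewrite fmorph_eq0 gt_eqF.
rewrite /curvature gpmE.
have -> : (fun x' y' => (ln (complex.Re (gpm M x' y')))%:C) =
    fun x' y' => (ln (a / rho x' y' ^+ 2))%:C.
  by apply/boolp.funeq2P => x' y'; rewrite gpmE.
rewrite (delb_ln_conformal a_gt0) (delM (smooth_cst _) (smoothM smooth_zeta smooth_crhoV)).
rewrite del_cst del_zeta_crhoV conformalE rmorphM fmorphV rmorph_nat.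
by move: (crho x y) (crho_neq0 x y) => r r0; field; rewrite a0 r0.
Qed.

End Curvature.

Theorem mainTheorem2 (R : realType) (N : nat) (hN : (2 <= N)%N)
  (alpha : 'I_N.-1 -> R) (halpha : exists k, alpha k != 0) :
  (forall x y : R, gpp (bbP alpha) x y = 0) /\
  exists a : R, 0 < a /\
    (forall x y : R,
       gpm (bbP alpha) x y = (a / (1 + x ^+ 2 + y ^+ 2) ^+ 2)%:C) /\
    (forall x y : R, curvature (bbP alpha) x y = (8%:R / a)%:C).
Proof.
case: N hN alpha halpha => [|[|m]] // _ alpha halpha.
set a := \sum_(k < m.+1) dalpha alpha k ^+ 2 * lam R m.+1 k.
have a_gt0 : 0 < a := sum_dalpha_lam_gt0 halpha.
have gpmE x y : gpm (bbP alpha) x y = (a / rho x y ^+ 2)%:C.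
  by rewrite gpm_bbP conformalE.
split; first exact: gpp_bbP.
exists a; split=> //; split; first exact: gpmE.
exact: curvature_conformal a_gt0 gpmE.
Qed.
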